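(* Let $\eta^{(\varepsilon)}_n$, $\varepsilon\in(0,1]$, be Markov chains on $\mathbb{X}=\{1,\dots,N\}$ with transition probabilities $p_{ij}(\varepsilon)$ satisfying conditions A and D of the context for some $\varepsilon_0\in(0,1]$ and transition sets $\mathbb{Y}_i$. Fix $r\in\mathbb{X}$ and let $_r\eta^{(\varepsilon)}_n$ be the reduced Markov chain on $_r\mathbb{X}=\mathbb{X}\setminus\{r\}$, with transition probabilities $_rp_{ij}(\varepsilon)$, $i,j\in{}_r\mathbb{X}$. Then conditions A and D hold for the chains $_r\eta^{(\varepsilon)}_n$ with the same $\varepsilon_0$ and with transition sets $_r\mathbb{Y}_i=\mathbb{Y}^-_{ir}\cup\mathbb{Y}^+_{ir}$, $i\in{}_r\mathbb{X}$; in particular, for every $j\in{}_r\mathbb{Y}_i$, $i\in{}_r\mathbb{X}$, $_rp_{ij}(\varepsilon)$ admits a pivotal $(_rl^-_{ij},{}_rl^+_{ij})$-expansion $_rp_{ij}(\varepsilon)=\sum_{l={}_rl^-_{ij}}^{_rl^+_{ij}}{}_ra_{ij}[l]\varepsilon^l+{}_ro_{ij}(\varepsilon^{_rl^+_{ij}})$, $\varepsilon\in(0,\varepsilon_0]$, with $0\le{}_rl^-_{ij}\le{}_rl^+_{ij}$ and $_ra_{ij}[_rl^-_{ij}]>0$.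
   Context: A $(h,k)$-expansion of a function $A$ on $(0,\varepsilon_0]$ is a representation $A(\varepsilon)=\sum_{l=h}^k a_l\varepsilon^l+o_A(\varepsilon^k)$ with integers $h\le k$, real $a_l$, and $o_A(\varepsilon^k)/\varepsilon^k\to0$ as $\varepsilon\to0$; pivotal means $a_h\ne0$. For $\varepsilon\in(0,1]$, $\eta^{(\varepsilon)}_n$ is a homogeneous Markov chain on $\mathbb{X}=\{1,\dots,N\}$ with stochastic transition matrix $\|p_{ij}(\varepsilon)\|$. Condition A: there exist $\mathbb{Y}_i\subseteq\mathbb{X}$, $i\in\mathbb{X}$, and $\varepsilon_0\in(0,1]$ such that for $\varepsilon\in(0,\varepsilon_0]$: (a) $p_{ij}(\varepsilon)>0$ for $j\in\mathbb{Y}_i$; (b) $p_{ij}(\varepsilon)=0$ for $j\notin\mathbb{Y}_i$; (c) for every $i,j\in\mathbb{X}$ there exist $n\ge1$ and $i=l_0,\dots,l_n=j$ with $l_{k+1}\in\mathbb{Y}_{l_k}$. Condition D: for $j\in\mathbb{Y}_i$, $i\in\mathbb{X}$: $p_{ij}(\varepsilon)=\sum_{l=l^-_{ij}}^{l^+_{ij}}a_{ij}[l]\varepsilon^l+o_{ij}(\varepsilon^{l^+_{ij}})$, $\varepsilon\in(0,\varepsilon_0]$, with integers $0\le l^-_{ij}\le l^+_{ij}<\infty$, $a_{ij}[l^-_{ij}]>0$ and $o_{ij}(\varepsilon^{l^+_{ij}})/\varepsilon^{l^+_{ij}}\to0$. Reduced chain: $_r\xi_0=0$, $_r\xi_n=\min\{k>{}_r\xi_{n-1}:\eta^{(\varepsilon)}_k\ne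 r\}$, $_r\eta^{(\varepsilon)}_n=\eta^{(\varepsilon)}_{_r\xi_n}$ (started from a state in $_r\mathbb{X}$); its transition probabilities are $_rp_{ij}(\varepsilon)=p_{ij}(\varepsilon)+p_{ir}(\varepsilon)\frac{p_{rj}(\varepsilon)}{1-p_{rr}(\varepsilon)}$, $i,j\in{}_r\mathbb{X}$. Sets: $\mathbb{Y}^-_{ir}=\{j\in{}_r\mathbb{X}:j\in\mathbb{Y}_r\}$ if $r\in\mathbb{Y}_i$ and $\mathbb{Y}^-_{ir}=\emptyset$ if $r\notin\mathbb{Y}_i$; $\mathbb{Y}^+_{ir}=\{j\in{}_r\mathbb{X}:j\in\mathbb{Y}_i\}$. *)

From HB Require Import structures.
From mathcomp Require Import all_boot all_order all_algebra.
From mathcomp Require Import all_classical all_reals all_analysis.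
Set Implicit Arguments. Unset Strict Implicit. Unset Printing Implicit Defensive.
Import Order.TTheory GRing.Theory Num.Theory.
Import numFieldNormedType.Exports.
Local Open Scope ring_scope.
Local Open Scope classical_set_scope.

Definition expansion (R : realType) (A : R -> R) (eps0 : R) (h k : nat) (a : nat -> R) : Prop :=
  (h <= k)%N /\
  exists o : R -> R,
    (forall e, 0 < e <= eps0 -> A e = \sum_(h <= l < k.+1) a l * e ^+ l + o e) /\
    (fun e => o e / e ^+ k) @ 0^'+ --> (0 : R).

Local Close Scope classical_set_scope.

Definition pivotal_expansion (R : realType) (A : R -> R) (eps0 : R) (h k : nat) (a : nat -> R) : Prop :=
  expansion A eps0 h k a /\ a h != 0.

Definition stochastic (R : realType) (T : finType) (P : T -> T -> R) : Prop :=
  (forall i j, 0 <= P i j) /\ (forall i, \sum_(j : T) P i j = 1).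

Definition condA (R : realType) (T : finType) (p : R -> T -> T -> R)
    (Y : T -> {set T}) (eps0 : R) : Prop :=
  [/\ (forall e, 0 < e <= eps0 -> forall i j, j \in Y i -> 0 < p e i j),
      (forall e, 0 < e <= eps0 -> forall i j, j \notin Y i -> p e i j = 0) &
      (forall i j : T, exists s : seq T,
          [/\ (0 < size s)%N, path (fun x y => y \in Y x) i s & last i s = j])].

Definition condD (R : realType) (T : finType) (p : R -> T -> T -> R)
    (Y : T -> {set T}) (eps0 : R) : Prop :=
  forall i j, j \in Y i ->
    exists (lm lp : nat) (a : nat -> R),
      expansion (fun e => p e i j) eps0 lm lp a /\ 0 < a lm.

Definition redX (N : nat) (r : 'I_N) := {i : 'I_N | i != r}.
HB.instance Definition _ (N : nat) (r : 'I_N) := Finite.on (redX r).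

Definition red_p (R : realType) (N : nat) (p : R -> 'I_N -> 'I_N -> R) (r : 'I_N)
    (e : R) (i j : redX r) : R :=
  p e (val i) (val j) + p e (val i) r * (p e r (val j) / (1 - p e r r)).

Arguments red_p {R N} p r e i j.

Definition Yminus (N : nat) (Y : 'I_N -> {set 'I_N}) (r : 'I_N) (i : redX r) : {set redX r} :=
  if r \in Y (val i) then [set j : redX r | val j \in Y r] else finset.set0.
Arguments Yminus {N} Y r i.
Definition Yplus (N : nat) (Y : 'I_N -> {set 'I_N}) (r : 'I_N) (i : redX r) : {set redX r} :=
  [set j : redX r | val j \in Y (val i)].
Arguments Yplus {N} Y r i.
Definition red_Y (N : nat) (Y : 'I_N -> {set 'I_N}) (r : 'I_N) (i : redX r) : {set redX r} :=
  Yminus Y r i :|: Yplus Y r i.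
Arguments red_Y {N} Y r i.

From mathcomp Require Import all_boot all_order all_algebra.
From mathcomp Require Import all_classical all_reals all_analysis.
From mathcomp Require Import ring.
Set Implicit Arguments.
Unset Strict Implicit.
Import Order.TTheory GRing.Theory Num.Theory.
Import numFieldNormedType.Exports.
Local Open Scope ring_scope.
Local Open Scope classical_set_scope.

(* For a function that is positive near 0, condition D only asks for a leading
   term: if A(e)/e^h -> c > 0 then A(e) = c e^h + o(e^h) is already a pivotal
   (h,h)-expansion, and conversely every expansion with positive leading
   coefficient yields such a leading term.  Positive leading terms survive sums
   (no cancellation can occur), products and quotients.  In
   _r p_ij = p_ij + p_ir p_rj / (1 - p_rr) the denominator equals
   sum_{k <> r} p_rk, whose leading order is at most that of its summand p_rj,
   so the detour through r has a positive leading term exactly when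
   r \in Y_i and j \in Y_r.  Condition A for the reduced chain follows from
   positivity of both terms and by deleting the visits to r from paths of the
   original chain. *)

Section LeadingTerm.
Variable R : realType.
Implicit Types (A B D : R -> R) (h : nat) (c : R).

Definition leading_term A h c := (fun e => A e / e ^+ h) @ 0^'+ --> c.
Definition has_pos_leading_term A := exists h c, 0 < c /\ leading_term A h c.
Definition eventually_zero A := \forall e \near (0 : R)^'+, A e = 0.
Definition zero_or_leading A := eventually_zero A \/ has_pos_leading_term A.

Lemma cvg_expr_at_right n : (fun e : R => e ^+ n) @ 0^'+ --> (0 : R) ^+ n.
Proof. by apply: cvg_at_right_filter; exact: exprn_continuous. Qed.

Lemma mulr_expr_subn (x e : R) h1 h2 : e != 0 -> (h1 <= h2)%N ->
  x / e ^+ h2 * e ^+ (h2 - h1) = x / e ^+ h1.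
Proof.
move=> e0 le12; rewrite -{1}(subnK le12) exprD.
by field; rewrite !expf_neq0.
Qed.

Lemma leading_term_near_eq {A B h c} :
  (\forall e \near (0 : R)^'+, A e = B e) -> leading_term A h c -> leading_term B h c.
Proof.
move=> AB; apply: cvg_trans; apply: near_eq_cvg.
by apply: filterS AB => e /= ->.
Qed.

Lemma leading_term_eventually_zeroD {A B h c} :
  leading_term A h c -> eventually_zero B -> leading_term (fun e => A e + B e) h c.
Proof.
move=> HA HB; apply: leading_term_near_eq HA.
by apply: filterS HB => e /= ->; rewrite addr0.
Qed.

Lemma leading_termDl {A B h1 h2 c1 c2} : (h1 <= h2)%N ->
  leading_term A h1 c1 -> leading_term B h2 c2 ->
  leading_term (fun e => A e + B e) h1 (c1 + c2 * 0 ^+ (h2 - h1)).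
Proof.
move=> le12 HA HB.
apply: cvg_trans _ (cvgD HA (cvgM HB (cvg_expr_at_right (n := (h2 - h1)%N)))).
apply: near_eq_cvg; near=> e.
have e0 : e != 0 by rewrite gt_eqF //; near: e; exact: nbhs_right_gt.
by rewrite !fctE /= mulr_expr_subn // mulrDl.
Unshelve. all: by end_near. Qed.

Lemma leading_termM {A B h1 h2 c1 c2} : leading_term A h1 c1 -> leading_term B h2 c2 ->
  leading_term (fun e => A e * B e) (h1 + h2) (c1 * c2).
Proof.
move=> HA HB; apply: cvg_trans _ (cvgM HA HB); apply: near_eq_cvg; near=> e.
have e0 : e != 0 by rewrite gt_eqF //; near: e; exact: nbhs_right_gt.
by rewrite /= exprD; field; rewrite !expf_neq0.
Unshelve. all: by end_near. Qed.

Lemma leading_term_div {A D h1 h2 c1 c2} : (h2 <= h1)%N -> c2 != 0 ->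
  leading_term A h1 c1 -> leading_term D h2 c2 ->
  leading_term (fun e => A e / D e) (h1 - h2) (c1 / c2).
Proof.
move=> le21 c20 HA HD; apply: cvg_trans _ (cvgM HA (cvgV c20 HD)).
apply: near_eq_cvg; near=> e.
have e0 : e != 0 by rewrite gt_eqF //; near: e; exact: nbhs_right_gt.
rewrite /= -{1}(subnK le21) exprD.
have [->|D0] := eqVneq (D e) 0; first by rewrite mul0r !(invr0, mulr0, mul0r).
by field; rewrite D0 !expf_neq0.
Unshelve. all: by end_near. Qed.

Lemma pos_leading_termD {A B h c} : 0 < c -> leading_term A h c -> zero_or_leading B ->
  exists h' c', [/\ (h' <= h)%N, 0 < c' & leading_term (fun e => A e + B e) h' c'].
Proof.
have coef_gt0 c1 c2 n : 0 < c1 -> 0 < c2 -> 0 < c1 + c2 * 0 ^+ n.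
  by move=> c1p c2p; rewrite ltr_pwDl // mulr_ge0 ?exprn_ge0 // ltW.
move=> cp HA [B0|[h2 [c2 [c2p HB]]]].
  by exists h, c; split => //; exact: leading_term_eventually_zeroD.
have [le_h_h2|lt_h2_h] := leqP h h2.
  exists h, (c + c2 * 0 ^+ (h2 - h)); split; [by [] | exact: coef_gt0 |].
  exact: leading_termDl.
exists h2, (c2 + c * 0 ^+ (h - h2)); split; [exact: ltnW | exact: coef_gt0 |].
apply: leading_term_near_eq (leading_termDl (ltnW lt_h2_h) HB HA).
by near=> e; rewrite addrC.
Unshelve. all: by end_near. Qed.

Lemma has_pos_leading_termDl {A B} :
  has_pos_leading_term A -> zero_or_leading B -> has_pos_leading_term (fun e => A e + B e).
Proof.
move=> [h [c [cp HA]]] /(pos_leading_termD cp HA) [h' [c' [_ c'p HAB]]].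
by exists h', c'.
Qed.

Lemma has_pos_leading_termDr {A B} :
  zero_or_leading A -> has_pos_leading_term B -> has_pos_leading_term (fun e => A e + B e).
Proof.
move=> zA /has_pos_leading_termDl /(_ zA) [h [c [cp HBA]]].
exists h, c; split => //; apply: leading_term_near_eq HBA.
by near=> e; rewrite addrC.
Unshelve. all: by end_near. Qed.

Lemma zero_or_leadingD {A B} :
  zero_or_leading A -> zero_or_leading B -> zero_or_leading (fun e => A e + B e).
Proof.
move=> zA zB; case: (zA) => [A0|oA]; last by right; exact: has_pos_leading_termDl.
case: (zB) => [B0|oB]; last by right; exact: has_pos_leading_termDr.
by left; apply: filterS2 A0 B0 => e /= -> ->; rewrite addr0.
Qed.

Lemma zero_or_leading_sum {I : Type} {s : seq I} {P : pred I} {F : I -> R -> R} :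
  (forall i, P i -> zero_or_leading (F i)) ->
  zero_or_leading (fun e => \sum_(i <- s | P i) F i e).
Proof.
move=> zF; elim: s => [|i s IH].
  by left; near=> e; rewrite big_nil.
case Pi: (P i); under [X in zero_or_leading X]funext do rewrite big_cons Pi => //.
exact: zero_or_leadingD (zF i Pi) IH.
Unshelve. all: by end_near. Qed.

Lemma expansion_leading_term {A} {eps0 : R} {lm lp a} : 0 < eps0 ->
  expansion A eps0 lm lp a -> leading_term A lm (a lm).
Proof.
move=> eps0_gt0 [le_lm_lp [rem [A_eq rem_small]]].
have poly_cvg : (fun e => \sum_(lm <= l < lp.+1) a l * e ^+ (l - lm)) @ 0^'+ -->
    \sum_(lm <= l < lp.+1) a l * 0 ^+ (l - lm).
  apply: cvg_big => [|l _]; first exact: add_continuous.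
  by apply: cvgMl_tmp; exact: cvg_expr_at_right.
have -> : a lm = \sum_(lm <= l < lp.+1) a l * 0 ^+ (l - lm) + 0 * 0 ^+ (lp - lm).
  rewrite mul0r addr0 big_ltn ?ltnS // subnn expr0 mulr1.
  rewrite big_nat_cond big1 ?addr0 // => l /andP[/andP[lt_lm_l _] _].
  by rewrite expr0n subn_eq0 leqNgt lt_lm_l mulr0.
apply: cvg_trans _
  (cvgD poly_cvg (cvgM rem_small (cvg_expr_at_right (n := (lp - lm)%N)))).
apply: near_eq_cvg; near=> e.
have e0 : e != 0 by rewrite gt_eqF //; near: e; exact: nbhs_right_gt.
have e_small : 0 < e <= eps0.
  by apply/andP; split; near: e; [exact: nbhs_right_gt | exact: nbhs_right_le].
rewrite !fctE /= mulr_expr_subn // (A_eq e e_small) mulrDl big_distrl /=; congr (_ + _).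
rewrite !big_seq; apply: eq_bigr => l; rewrite mem_index_iota => /andP[le_lm_l _].
have -> : e ^+ l = e ^+ (l - lm) * e ^+ lm by rewrite -exprD subnK.
by rewrite mulrA mulfK // expf_neq0.
Unshelve. all: by end_near. Qed.

Lemma leading_term_expansion {A h c} (eps0 : R) :
  leading_term A h c -> expansion A eps0 h h (fun _ => c).
Proof.
move=> HA; split => //; exists (fun e => A e - c * e ^+ h); split.
  by move=> e _; rewrite big_nat1 addrC subrK.
rewrite -[X in _ --> X](subrr c); apply: cvg_trans _ (cvgB HA (cvg_cst c)).
apply: near_eq_cvg; near=> e.
have e0 : e != 0 by rewrite gt_eqF //; near: e; exact: nbhs_right_gt.
by rewrite !fctE /= mulrBl mulfK // expf_neq0.
Unshelve. all: by end_near. Qed.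

End LeadingTerm.

Section ReducedPaths.
Variables (N : nat) (Y : 'I_N -> {set 'I_N}) (r : 'I_N).

Lemma path_from_r_exit s :
  path (fun x y => y \in Y x) r s -> last r s != r -> exists2 y, y != r & y \in Y r.
Proof.
elim: s => [|y s IH] /=; first by rewrite eqxx.
move=> /andP[ry path_s] last_s; have [y_r|] := eqVneq y r; last by exists y.
by rewrite y_r in path_s last_s; exact: IH.
Qed.

(* A state x of the original path stands for the reduced state a: either
   x = a, or x = r was entered directly from a. *)
Lemma reduce_path (j : redX r) s (x : 'I_N) (a : redX r) :
  x = val a \/ (x = r /\ r \in Y (val a)) ->
  path (fun x y => y \in Y x) x s -> last x s = val j ->
  exists t, [/\ path (fun a b => b \in red_Y Y r a) a t, last a t = j &
                (0 < size s)%N -> (0 < size t)%N].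
Proof.
elim: s x a => [|y s IH] x a x_a /=.
  move=> _ x_j; case: x_a => [x_a|[x_r _]].
    by exists [::]; split => //; apply: val_inj; rewrite /= -x_a.
  by move: (valP j); rewrite /= -x_j x_r eqxx.
move=> /andP[xy path_s] last_s; have [y_r|y_r] := eqVneq y r.
  have s_gt0 : (0 < size s)%N.
    by case: s path_s last_s {IH} => //= _ y_j; move: (valP j); rewrite /= -y_j y_r eqxx.
  have y_a : y = val a \/ (y = r /\ r \in Y (val a)).
    by right; split => //; case: x_a => [x_a|[_ r_a]] //; rewrite -x_a -y_r.
  have [t [path_t last_t size_t]] := IH y a y_a path_s last_s.
  by exists t; split => // _; exact: size_t.
pose b : redX r := exist _ y y_r.
have ab : b \in red_Y Y r a.
  rewrite inE; case: x_a => [x_a|[x_r r_a]].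
    by rewrite orbC /Yplus inE /= -x_a xy.
  by move: xy; rewrite x_r /Yminus r_a !inE /= => ->.
have [t [path_t last_t _]] := IH y b (or_introl erefl) path_s last_s.
by exists (b :: t); split => //=; rewrite ab path_t.
Qed.

End ReducedPaths.

Section ReducedChain.
Variables (R : realType) (N : nat) (p : R -> 'I_N -> 'I_N -> R).
Variables (Y : 'I_N -> {set 'I_N}) (eps0 : R) (r : 'I_N).
Hypothesis p_stochastic : forall e, 0 < e <= 1 -> stochastic (p e).
Hypothesis eps0_gt0 : 0 < eps0.
Hypothesis eps0_le1 : eps0 <= 1.
Hypothesis pA : condA p Y eps0.
Hypothesis pD : condD p Y eps0.

Lemma p_stochastic_small e : 0 < e <= eps0 -> stochastic (p e).
Proof.
by move=> /andP[e_gt0 e_le]; apply: p_stochastic; rewrite e_gt0 (le_trans e_le eps0_le1).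
Qed.

Lemma p_ge0 e x y : 0 < e <= eps0 -> 0 <= p e x y.
Proof. by move=> /p_stochastic_small[]. Qed.

Lemma p_gt0 e x y : 0 < e <= eps0 -> y \in Y x -> 0 < p e x y.
Proof. by case: pA => p_pos _ _ /p_pos; apply. Qed.

Lemma p_eq0 e x y : 0 < e <= eps0 -> y \notin Y x -> p e x y = 0.
Proof. by case: pA => _ p_zero _ /p_zero; apply. Qed.

Lemma one_sub_prr e : 0 < e <= eps0 -> 1 - p e r r = \sum_(k | k != r) p e r k.
Proof.
move=> /p_stochastic_small[_ p_sum1].
by rewrite -(p_sum1 r) (bigD1 r) //= addrC addrK.
Qed.

Lemma one_sub_prr_gt0 e x : 0 < e <= eps0 -> x != r -> 0 < 1 - p e r r.
Proof.
move=> e_small x_r; case: pA => _ _ /(_ r x) [s [_ path_s last_s]].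
have [y y_r ry] : exists2 y, y != r & y \in Y r.
  by apply: path_from_r_exit path_s _; rewrite last_s.
rewrite one_sub_prr // (bigD1 y) //= ltr_pwDl ?p_gt0 //.
by rewrite sumr_ge0 // => k _; exact: p_ge0.
Qed.

Lemma one_sub_prr_ge0 e : 0 < e <= eps0 -> 0 <= 1 - p e r r.
Proof. by move=> e_small; rewrite one_sub_prr // sumr_ge0 // => k _; exact: p_ge0. Qed.

Definition detour e x y := p e x r * (p e r y / (1 - p e r r)).

Lemma red_pE e (i j : redX r) :
  red_p p r e i j = p e (val i) (val j) + detour e (val i) (val j).
Proof. by []. Qed.

Lemma detour_ge0 e x y : 0 < e <= eps0 -> 0 <= detour e x y.
Proof. by move=> e_small; rewrite mulr_ge0 ?divr_ge0 ?p_ge0 ?one_sub_prr_ge0. Qed.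

Lemma detour_gt0 e x y : 0 < e <= eps0 -> r \in Y x -> y \in Y r -> y != r ->
  0 < detour e x y.
Proof.
move=> e_small r_x y_r y_neq_r.
by rewrite mulr_gt0 ?divr_gt0 ?p_gt0 // (one_sub_prr_gt0 e_small y_neq_r).
Qed.

Lemma detour_eq0 e x y : 0 < e <= eps0 -> r \notin Y x \/ y \notin Y r -> detour e x y = 0.
Proof.
move=> e_small [r_x|y_r]; first by rewrite /detour (p_eq0 e_small r_x) mul0r.
by rewrite /detour (p_eq0 e_small y_r) mul0r mulr0.
Qed.

Lemma red_p_gt0 e (i j : redX r) : 0 < e <= eps0 -> j \in red_Y Y r i -> 0 < red_p p r e i j.
Proof.
move=> e_small; rewrite red_pE inE => /orP[|]; last first.
  by rewrite inE => j_i; rewrite ltr_wpDr ?detour_ge0 ?p_gt0.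
rewrite /Yminus; case: ifP => r_i; rewrite inE // => j_r.
by rewrite ltr_wpDl ?p_ge0 ?detour_gt0 // (valP j).
Qed.

Lemma red_p_eq0 e (i j : redX r) : 0 < e <= eps0 -> j \notin red_Y Y r i -> red_p p r e i j = 0.
Proof.
move=> e_small; rewrite red_pE inE negb_or /Yplus inE => /andP[j_Yminus j_i].
rewrite p_eq0 // add0r detour_eq0 //.
by move: j_Yminus; rewrite /Yminus; case: ifP => r_i; rewrite ?inE; [right | left].
Qed.

Lemma red_Y_connected (i j : redX r) : exists s : seq (redX r),
  [/\ (0 < size s)%N, path (fun a b => b \in red_Y Y r a) i s & last i s = j].
Proof.
case: pA => _ _ /(_ (val i) (val j)) [s [s_gt0 path_s last_s]].
have [t [path_t last_t size_t]] := reduce_path (or_introl erefl) path_s last_s.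
by exists t; split => //; exact: size_t.
Qed.

Lemma condA_red : condA (red_p p r) (red_Y Y r) eps0.
Proof.
split=> [e e_small i j|e e_small i j|]; [exact: red_p_gt0 | exact: red_p_eq0 |].
exact: red_Y_connected.
Qed.

Lemma eventually_small : \forall e \near (0 : R)^'+, 0 < e <= eps0.
Proof.
near=> e; apply/andP; split; near: e; [exact: nbhs_right_gt | exact: nbhs_right_le].
Unshelve. all: by end_near. Qed.

Lemma p_has_pos_leading_term x y : y \in Y x -> has_pos_leading_term (fun e => p e x y).
Proof.
move=> y_x; have [lm [lp [a [p_exp a_gt0]]]] := pD y_x.
by exists lm, (a lm); split => //; exact: expansion_leading_term eps0_gt0 p_exp.
Qed.

Lemma p_zero_or_leading x y : zero_or_leading (fun e => p e x y).
Proof.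
have [y_x|y_x] := boolP (y \in Y x); first by right; exact: p_has_pos_leading_term.
by left; apply: filterS eventually_small => e e_small; exact: p_eq0.
Qed.

Lemma one_sub_prr_leading_term y h c : y != r -> 0 < c ->
  leading_term (fun e => p e r y) h c ->
  exists h' c', [/\ (h' <= h)%N, 0 < c' & leading_term (fun e => 1 - p e r r) h' c'].
Proof.
move=> y_r c_gt0 p_ry.
have rest_zero_or_leading : zero_or_leading (fun e => \sum_(k | (k != r) && (k != y)) p e r k).
  by apply: zero_or_leading_sum => k _; exact: p_zero_or_leading.
have [h' [c' [le_h' c'_gt0 sum_lead]]] := pos_leading_termD c_gt0 p_ry rest_zero_or_leading.
exists h', c'; split => //; apply: leading_term_near_eq sum_lead.
by apply: filterS eventually_small => e e_small; rewrite one_sub_prr // (bigD1 y y_r).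
Qed.

Lemma detour_has_pos_leading_term x y : r \in Y x -> y \in Y r -> y != r ->
  has_pos_leading_term (fun e => detour e x y).
Proof.
move=> r_x y_r y_neq_r.
have [h0 [c0 [c0_gt0 p_xr]]] := p_has_pos_leading_term r_x.
have [h1 [c1 [c1_gt0 p_ry]]] := p_has_pos_leading_term y_r.
have [h [c [le_h c_gt0 D_lead]]] := one_sub_prr_leading_term y_neq_r c1_gt0 p_ry.
exists (h0 + (h1 - h))%N, (c0 * (c1 / c)); split; first by rewrite mulr_gt0 ?divr_gt0.
exact: leading_termM p_xr (leading_term_div le_h (lt0r_neq0 c_gt0) p_ry D_lead).
Qed.

Lemma detour_zero_or_leading x y : y != r -> zero_or_leading (fun e => detour e x y).
Proof.
move=> y_neq_r; have [r_x|r_x] := boolP (r \in Y x); last first.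
  by left; apply: filterS eventually_small => e e_small; apply: detour_eq0 => //; left.
have [y_r|y_r] := boolP (y \in Y r); first by right; exact: detour_has_pos_leading_term.
by left; apply: filterS eventually_small => e e_small; apply: detour_eq0 => //; right.
Qed.

Lemma red_p_has_pos_leading_term (i j : redX r) : j \in red_Y Y r i ->
  has_pos_leading_term (fun e => red_p p r e i j).
Proof.
rewrite inE => /orP[|]; last first.
  rewrite inE => j_i; apply: has_pos_leading_termDl (p_has_pos_leading_term j_i) _.
  exact: detour_zero_or_leading (valP j).
rewrite /Yminus; case: ifP => r_i; rewrite inE // => j_r.
exact: has_pos_leading_termDr (p_zero_or_leading _ _)
  (detour_has_pos_leading_term r_i j_r (valP j)).
Qed.

Lemma condD_red : condD (red_p p r) (red_Y Y r) eps0.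
Proof.
move=> i j /red_p_has_pos_leading_term [h [c [c_gt0 red_lead]]].
by exists h, h, (fun _ => c); split => //; exact: leading_term_expansion.
Qed.

End ReducedChain.

Theorem theorem2 (R : realType) (N : nat) (p : R -> 'I_N -> 'I_N -> R)
    (Y : 'I_N -> {set 'I_N}) (eps0 : R) (r : 'I_N) :
  (forall e : R, 0 < e <= 1 -> stochastic (p e)) ->
  0 < eps0 <= 1 ->
  condA p Y eps0 -> condD p Y eps0 ->
  condA (red_p p r) (red_Y Y r) eps0 /\ condD (red_p p r) (red_Y Y r) eps0.
Proof.
move=> p_stochastic /andP[eps0_gt0 eps0_le1] pA pD.
by split; [apply: condA_red | apply: condD_red].
Qed.
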